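(* If a propositional Hilbert-type calculus $\mathbf{C}$ is strictly analytic, then $\mathrm{MC}(\mathbf{C})=\mathrm{Thm}(\mathbf{C})$.
   Context: A propositional language has variables $X_1,X_2,\ldots$ and finitely many connectives with arities. The depth $\mathrm{dp}(A)$ of a formula is $0$ for variables and constants and $\max\{\mathrm{dp}(A_1),\ldots,\mathrm{dp}(A_n)\}+1$ for $A=\Box(A_1,\ldots,A_n)$. $\mathrm{Var}(A)$ is the set of variables in $A$. A substitution $\sigma$ maps variables to formulas; $F\sigma$ is the result of simultaneous replacement. A propositional Hilbert-type calculus $\mathbf{C}$ is given by a finite set of axioms and a finite set of rules (premises $A_1,\ldots,A_n$, conclusion $C$). A derivation is a finite sequence of formulas each of which is a substitution instance of an axiom or is $C\sigma$ for a rule and substitution $\sigma$ with all $A_j\sigma$ occurring earlier; $\mathrm{Thm}(\mathbf{C})$ is the set of derivable formulas. $\mathbf{C}$ is strictly analytic if for every rule with premises $A_1,\ldots,A_n$ and conclusion $C$, each $i$ satisfies $\mathrm{Var}(A_i)\subseteq\mathrm{Var}(C)$ and $\mathrm{dp}(A_i\sigma)\le\mathrm{dp}(C\sigma)$ for every substitution $\sigma$. A finite-valued logic $\mathbf{M}$ has a finite set of truth values, designated values, and a truth function per connective; valuations extend to formulas; a valuation satisfies $F$ if $F$ is designated; tautologies are formulas satisfied by all valuations. $\mathbf{M}$ is a cover for $\mathbf{C}$ if all axioms are tautologies of $\mathbf{M}$ and for every rule every valuation satisfying all premises satisfies the conclusion. $\mathrm{MC}(\mathbf{C})$ is the set of formulas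 that are tautologies of every finite-valued cover of $\mathbf{C}$. *)

From mathcomp Require Import all_boot.
From Stdlib Require List.

Set Implicit Arguments.
Unset Strict Implicit.
Unset Printing Implicit Defensive.

(* A propositional language: finitely many connectives, each with an arity.
   Constants are 0-ary connectives. *)
Record lang := Lang { conn : finType ; arity : conn -> nat }.

Section Syntax.
Variable L : lang.

(* Formulas: variables X_n (n : nat) and applications of connectives.
   Arguments are given as a list; well-formedness (correct arity) is the
   predicate [wf] below. *)
Inductive form : Type :=
| Var : nat -> form
| App : conn L -> seq form -> form.

Fixpoint wf (A : form) : Prop :=
  match A with
  | Var _ => True
  | App c args => size args = arity c /\ foldr and True (map wf args)
  end.

Fixpoint dp (A : form) : nat :=
  match A with
  | Var _ => 0
  | App c args =>
      match args with
      | [::] => 0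
      | _ => (foldr maxn 0 (map dp args)).+1
      end
  end.

Fixpoint occurs (x : nat) (A : form) : Prop :=
  match A with
  | Var y => x = y
  | App c args => foldr or False (map (occurs x) args)
  end.

Definition subst_t := nat -> form.
Definition wf_subst (s : subst_t) : Prop := forall x, wf (s x).

Fixpoint subst (s : subst_t) (A : form) : form :=
  match A with
  | Var x => s x
  | App c args => App c (map (subst s) args)
  end.

(* Hilbert-type calculus: finite lists of axioms and rules
   (a rule is (premises, conclusion)). *)
Record calculus := Calculus {
  axioms : seq form ;
  rules : seq (seq form * form) }.

Definition calc_wf (C : calculus) : Prop :=
  (forall A, List.In A (axioms C) -> wf A) /\
  (forall r, List.In r (rules C) ->
     (forall A, List.In A r.1 -> wf A) /\ wf r.2).

Definition is_derivation (C : calculus) (d : seq form) : Prop :=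
  forall i, i < size d ->
    let F := nth (Var 0) d i in
    (exists A s, List.In A (axioms C) /\ wf_subst s /\ F = subst s A) \/
    (exists r s, List.In r (rules C) /\ wf_subst s /\ F = subst s r.2 /\
       forall A, List.In A r.1 ->
         exists j, j < i /\ nth (Var 0) d j = subst s A).

Definition Thm (C : calculus) (F : form) : Prop :=
  exists d, is_derivation C d /\ exists i, i < size d /\ nth (Var 0) d i = F.

Definition strictly_analytic (C : calculus) : Prop :=
  forall r, List.In r (rules C) ->
    forall A, List.In A r.1 ->
      (forall x, occurs x A -> occurs x r.2) /\
      (forall s, wf_subst s -> dp (subst s A) <= dp (subst s r.2)).

Record fvlogic := FVLogic {
  tv : finType ;
  desig : pred tv ;
  op : forall c : conn L, (arity c).-tuple tv -> tv }.

Section Semantics.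
Variable M : fvlogic.

Fixpoint eval (v : nat -> tv M) (A : form) : tv M :=
  match A with
  | Var x => v x
  | App c args =>
      @op M c [tuple nth (v 0) (map (eval v) args) i | i < arity c]
  end.

Definition satisfies (v : nat -> tv M) (A : form) : Prop := desig (eval v A).

Definition tautology (A : form) : Prop := forall v, satisfies v A.

Definition cover (C : calculus) : Prop :=
  (forall A, List.In A (axioms C) -> tautology A) /\
  (forall r, List.In r (rules C) ->
     forall v, (forall A, List.In A r.1 -> satisfies v A) -> satisfies v r.2).
End Semantics.

Definition MC (C : calculus) (F : form) : Prop :=
  forall M : fvlogic, cover M C -> tautology M F.

End Syntax.

From HB Require Import structures.
From Pilot Require Import Defs.
From mathcomp Require Import all_boot boolp.

Set Implicit Arguments.
Unset Strict Implicit.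
Unset Printing Implicit Defensive.

(* For completeness, suppose F is
   a tautology of every finite-valued cover.  Take as truth values the
   well-formed formulas over Var(F) of depth at most dp(F), plus one extra
   value "out of range"; connectives act syntactically, yielding "out of
   range" when the result would leave the range, and a value is designated
   iff it is a theorem or "out of range".  A valuation then acts as a
   substitution.  If the instance of a rule's conclusion is in range, strict
   analyticity puts the instances of its premises in range as well, so the
   rules are sound and we have a cover.  Under the valuation X |-> X the
   formula F evaluates to itself, hence F is a theorem. *)

Lemma foldr_andP (T : Type) (P : T -> Prop) (s : seq T) :
  foldr and True (map P s) <-> (forall x, List.In x s -> P x).
Proof.
elim: s => [|y s IH] /=; first by split.
split=> [[Py /IH Ps] x [<-|] // /Ps | Hs] //.
by split=> [|]; [apply: Hs; left | apply/IH => x Hx; apply: Hs; right].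
Qed.

Lemma foldr_orP (T : Type) (P : T -> Prop) (s : seq T) :
  foldr or False (map P s) <-> exists2 x, List.In x s & P x.
Proof.
elim: s => [|y s IH] /=; first by split=> // [[x]].
split=> [[Py | /IH [x Hx Px]] | [x [<- | Hx] Px]]; first by exists y; first left.
- by exists x; first right.
- by left.
- by right; apply/IH; exists x.
Qed.

Lemma eq_map_In (T U : Type) (f g : T -> U) (s : seq T) :
  (forall x, List.In x s -> f x = g x) -> map f s = map g s.
Proof.
elim: s => [|x s IH] //= Hfg.
by rewrite Hfg ?IH // => [y Hy|]; [apply: Hfg; right | left].
Qed.

Lemma InP (T : eqType) (x : T) (s : seq T) : reflect (List.In x s) (x \in s).
Proof.
apply: (iffP idP); elim: s => [|y s IH] //=; rewrite inE.
- by case/orP => [/eqP ->|/IH]; [left | right].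
- by case=> [->|/IH ->]; rewrite ?eqxx ?orbT.
Qed.

Lemma mem_takeP (T : eqType) (x0 y : T) (s : seq T) i : i <= size s ->
  reflect (exists j, j < i /\ nth x0 s j = y) (y \in take i s).
Proof.
move=> Hi; apply: (iffP (nthP x0)); rewrite size_takel //.
- by case=> j Hj <-; exists j; rewrite nth_take.
- by case=> j [Hj <-]; exists j; rewrite ?nth_take.
Qed.

Lemma val_mktuple_nth (T : Type) (x0 : T) (s : seq T) n : size s = n ->
  val [tuple nth x0 s i | i < n] = s.
Proof.
move=> Hs; apply: (@eq_from_nth _ x0) => [|i]; rewrite size_tuple // => Hi.
exact: (nth_mktuple (fun j : 'I_n => nth x0 s j) x0 (Ordinal Hi)).
Qed.

Section Syntax.
Variable L : lang.
Implicit Types (G : form L) (s : subst_t L).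

Definition form_In_ind (P : form L -> Prop) (HVar : forall x, P (Var L x))
    (HApp : forall c args, (forall a, List.In a args -> P a) -> P (App c args)) :
    forall G, P G :=
  fix IH G := match G with
  | Var x => HVar x
  | App c args => HApp c args
     ((fix IHs (s : seq (form L)) : forall a, List.In a s -> P a :=
        match s with
        | [::] => fun a Ha => False_ind _ Ha
        | b :: s' => fun a Ha => match Ha with
                     | or_introl e => eq_ind b P (IH b) a e
                     | or_intror Ha' => IHs s' a Ha'
                     end
        end) args)
  end.

Fixpoint tree_of_form G : GenTree.tree (conn L + nat) :=
  match G with
  | Var x => GenTree.Leaf (inr x)
  | App c args => GenTree.Node 0 (GenTree.Leaf (inl c) :: map tree_of_form args)
  end.

Fixpoint form_of_tree (t : GenTree.tree (conn L + nat)) : form L :=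
  match t with
  | GenTree.Leaf (inr x) => Var L x
  | GenTree.Node _ (GenTree.Leaf (inl c) :: ts) => App c (map form_of_tree ts)
  | _ => Var L 0
  end.

Lemma tree_of_formK : cancel tree_of_form form_of_tree.
Proof.
elim/form_In_ind => [x|c args IH] //=.
by rewrite -map_comp (eq_map_In (g := id)) ?map_id.
Qed.

(* Needed for [seq_sub], which makes a finite type of truth values below. *)
HB.instance Definition _ := Countable.copy (form L) (can_type tree_of_formK).

Fixpoint vars G : seq nat :=
  match G with
  | Var x => [:: x]
  | App _ args => flatten (map vars args)
  end.

Lemma occurs_vars x G : occurs x G -> x \in vars G.
Proof.
elim/form_In_ind: G => [y|c args IH] /=; first by move->; rewrite mem_seq1.
case/foldr_orP=> a Ha Hx; apply/flattenP; exists (vars a); last exact: IH.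
by apply: map_f; apply/InP.
Qed.

Lemma dp_arg_lt (c : conn L) (args : seq (form L)) (a : form L) :
  List.In a args -> dp a < dp (App c args).
Proof.
have le_max (l : seq (form L)) :
    List.In a l -> dp a <= foldr maxn 0 (map (@dp L) l).
  elim: l => [|b l IH] //= [<-|/IH Ha]; first exact: leq_maxl.
  exact: leq_trans Ha (leq_maxr _ _).
by case: args => [|b l] // Ha; rewrite ltnS; exact: (le_max (b :: l)).
Qed.

Lemma subst_wf s G :
  wf G -> (forall x, occurs x G -> wf (s x)) -> wf (subst s G).
Proof.
elim/form_In_ind: G => [x|c args IH] /=; first by move=> _; apply.
move=> [Hsize /foldr_andP Hwf] Hs; split; first by rewrite size_map.
apply/foldr_andP => _ /(List.in_map_iff _ _ _) [a [<- Ha]].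
by apply: IH (Hwf a Ha) _ => // x Hx; apply: Hs; apply/foldr_orP; exists a.
Qed.

Lemma occurs_subst s G y :
  occurs y (subst s G) -> exists2 x, occurs x G & occurs y (s x).
Proof.
elim/form_In_ind: G => [x|c args IH] /=; first by exists x.
case/foldr_orP=> _ /(List.in_map_iff _ _ _) [a [<- Ha]] /(IH a Ha) [x Hx Hy].
by exists x => //; apply/foldr_orP; exists a.
Qed.

Lemma subst_fixed s G :
  (forall x, occurs x G -> s x = Var L x) -> subst s G = G.
Proof.
elim/form_In_ind: G => [x|c args IH] /= Hs; first exact: Hs.
congr App; rewrite -[RHS]map_id; apply: eq_map_In => a Ha.
by apply: IH => // x Hx; apply: Hs; apply/foldr_orP; exists a.
Qed.

Lemma eval_subst (M : fvlogic L) (v : nat -> tv M) s G : wf G ->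
  eval v (subst s G) = eval (fun x => eval v (s x)) G.
Proof.
elim/form_In_ind: G => [x|c args IH] //= [Hsize /foldr_andP Hwf].
congr (op _); apply: val_inj; rewrite !val_mktuple_nth ?size_map // -map_comp.
by apply: eq_map_In => a Ha; exact: IH a Ha (Hwf a Ha).
Qed.

End Syntax.

Section Derivations.
Variables (L : lang) (C : calculus L).
Implicit Types (F G : form L) (d p : seq (form L)).

Definition justified p F : Prop :=
  (exists A s, List.In A (axioms C) /\ wf_subst s /\ F = subst s A) \/
  (exists r s, List.In r (rules C) /\ wf_subst s /\ F = subst s r.2 /\
     forall A, List.In A r.1 -> subst s A \in p).

Lemma justified_sub p1 p2 F : {subset p1 <= p2} -> justified p1 F -> justified p2 F.
Proof.
move=> Hsub [Hax|[r [s [Hr [Hs [HF Hp]]]]]]; first by left.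
by right; exists r, s; do 3 split => //; move=> A /Hp /Hsub.
Qed.

Lemma is_derivationP d : is_derivation C d <->
  forall i, i < size d -> justified (take i d) (nth (Var L 0) d i).
Proof.
split=> Hd i Hi; have premP G := mem_takeP (Var L 0) G (ltnW Hi).
all: case: (Hd i Hi) => [Hax|[r [s [Hr [Hs [HF Hp]]]]]]; first by left.
all: by right; exists r, s; do 3 split => //; move=> A /Hp /premP.
Qed.

Lemma is_derivation_rcons d F :
  is_derivation C (rcons d F) <-> is_derivation C d /\ justified d F.
Proof.
have takeE i : i <= size d -> take i (rcons d F) = take i d.
  by move=> Hi; rewrite -cats1 takel_cat.
rewrite !is_derivationP size_rcons; split.
- move=> Hd; split=> [i Hi|].
  + by have := Hd i (ltnW Hi); rewrite (takeE _ (ltnW Hi)) nth_rcons Hi.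
  + by have := Hd _ (ltnSn _); rewrite takeE // take_size nth_rcons ltnn eqxx.
- case=> Hd HF i; rewrite ltnS leq_eqVlt => /orP [/eqP ->|Hi].
  + by rewrite takeE // take_size nth_rcons ltnn eqxx.
  + by rewrite (takeE _ (ltnW Hi)) nth_rcons Hi; apply: Hd.
Qed.

Lemma is_derivation_cat d1 d2 :
  is_derivation C d1 -> is_derivation C d2 -> is_derivation C (d1 ++ d2).
Proof.
move=> Hd1; elim/last_ind: d2 => [|d2 F IH]; first by rewrite cats0.
rewrite -rcons_cat !is_derivation_rcons => -[Hd2 HF]; split; first exact: IH.
by apply: justified_sub HF => G HG; rewrite mem_cat HG orbT.
Qed.

Lemma ThmP F : Thm C F <-> exists2 d, is_derivation C d & F \in d.
Proof.
split=> [[d [Hd [i [Hi HF]]]] | [d Hd /(nthP (Var L 0)) [i Hi HF]]].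
- by exists d => //; apply/(nthP (Var L 0)); exists i.
- by exists d; split => //; exists i.
Qed.

Lemma derivation_of_Thms p : {in p, forall F, Thm C F} ->
  exists2 d, is_derivation C d & {subset p <= d}.
Proof.
elim: p => [|F p IH] Hp; first by exists [::].
have /ThmP [d1 Hd1 HF] := Hp F (mem_head _ _).
have [|d2 Hd2 Hsub] := IH; first by move=> G HG; apply: Hp; rewrite inE HG orbT.
exists (d1 ++ d2); first exact: is_derivation_cat.
by move=> G; rewrite inE mem_cat => /orP [/eqP ->|/Hsub ->]; rewrite ?HF ?orbT.
Qed.

Lemma Thm_justified p F : {in p, forall G, Thm C G} -> justified p F -> Thm C F.
Proof.
move=> /derivation_of_Thms [d Hd Hsub] HF; apply/ThmP; exists (rcons d F).
- by apply/is_derivation_rcons; split => //; exact: justified_sub HF.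
- by rewrite mem_rcons mem_head.
Qed.

Section Soundness.
Variable M : fvlogic L.
Hypotheses (HC : calc_wf C) (HM : Defs.cover M C).

Lemma justified_tautology p F :
  {in p, forall G, tautology M G} -> justified p F -> tautology M F.
Proof.
have [[Wax Wr] [Max Mr]] := (HC, HM).
move=> Hp [[A [s [HA [_ ->]]]] | [r [s [Hr [_ [-> Hprem]]]]]] v.
  by rewrite /satisfies eval_subst; [exact: Max A HA _ | exact: Wax].
have [Wp Wc] := Wr r Hr; rewrite /satisfies eval_subst //.
apply: Mr Hr _ _ => A HA; rewrite /satisfies -eval_subst; last exact: Wp.
exact: Hp _ (Hprem A HA) v.
Qed.

Lemma derivation_tautology d : is_derivation C d -> {in d, forall F, tautology M F}.
Proof.
elim/last_ind: d => [|d F IH] //; rewrite is_derivation_rcons => -[Hd HF] G.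
rewrite mem_rcons inE => /orP [/eqP ->|]; last exact: IH.
exact: justified_tautology (IH Hd) HF.
Qed.

Lemma Thm_tautology F : Thm C F -> tautology M F.
Proof. by case/ThmP=> d Hd; exact: derivation_tautology. Qed.

End Soundness.
End Derivations.

Section Enumeration.
Variables (L : lang) (V : seq nat).

Fixpoint tuples_of (m : nat) (S : seq (form L)) : seq (seq (form L)) :=
  if m is m'.+1 then [seq a :: l | a <- S, l <- tuples_of m' S] else [:: [::]].

Lemma mem_tuples_of m S l : size l = m -> {subset l <= S} -> l \in tuples_of m S.
Proof.
elim: l m => [|a l IH] [|m] //= [Hsize] HS.
apply: allpairs_f; first by apply: HS; exact: mem_head.
by apply: IH => // b Hb; apply: HS; rewrite inE Hb orbT.
Qed.

Fixpoint enum_forms (k : nat) : seq (form L) :=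
  map (@Var L) V ++
  [seq App c args | c <- enum (conn L),
     args <- tuples_of (arity c) (if k is k'.+1 then enum_forms k' else [::])].

Lemma mem_enum_forms k G : wf G -> (forall x, occurs x G -> x \in V) ->
  dp G <= k -> G \in enum_forms k.
Proof.
elim/form_In_ind: G k => [x|c args IH] k.
  by move=> _ HV _; case: k => [|k]; rewrite mem_cat map_f ?HV.
move=> [Hsize /foldr_andP Hwf] HV Hdp.
suff Hargs :
    args \in tuples_of (arity c) (if k is k'.+1 then enum_forms k' else [::]).
  case: k {Hdp} Hargs => [|k] Hargs; rewrite /= mem_cat; apply/orP; right;
  by apply: (allpairs_f_dep (@App L)) Hargs; rewrite mem_enum.
apply: (mem_tuples_of Hsize) => a /InP Ha; have := leq_trans (dp_arg_lt c Ha) Hdp.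
case: k {Hdp} => [|k] // Hdp; apply: IH => //; first exact: Hwf.
by move=> x Hx; apply: HV; apply/foldr_orP; exists a.
Qed.

End Enumeration.

Section FragmentLogic.
Variables (L : lang) (C : calculus L) (V : seq nat) (n : nat).
Implicit Types (G : form L) (s : subst_t L).

Definition fragment G : Prop :=
  [/\ wf G, forall x, occurs x G -> x \in V & dp G <= n].

Lemma fragment_arg c args a : fragment (App c args) -> List.In a args -> fragment a.
Proof.
move=> [[_ /foldr_andP Hwf] HV Hdp] Ha; split; first exact: Hwf.
- by move=> x Hx; apply: HV; apply/foldr_orP; exists a.
- exact: ltnW (leq_trans (dp_arg_lt c Ha) Hdp).
Qed.

Lemma fragment_subst s G : wf G -> (forall x, occurs x G -> fragment (s x)) ->
  dp (subst s G) <= n -> fragment (subst s G).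
Proof.
move=> HG Hs Hdp; split=> //; first by apply: subst_wf => // x /Hs [].
by move=> y /occurs_subst [x /Hs [_ HV _]]; exact: HV.
Qed.

Definition fragment_forms : seq (form L) :=
  [seq G <- enum_forms L V n | `[< fragment G >] ].

Lemma fragment_formsP G : reflect (fragment G) (G \in fragment_forms).
Proof.
rewrite mem_filter; apply: (iffP andP) => [[/asboolP]|HG] //.
by split; [exact/asboolP | case: HG; exact: mem_enum_forms].
Qed.

Definition fragment_value : finType := option (seq_sub fragment_forms).

Definition form_of (o : fragment_value) : form L :=
  if o is Some G then val G else Var L 0.

Definition fragment_op c (t : (arity c).-tuple fragment_value) :
    fragment_value :=
  if all isSome t then insub (App c (map form_of t)) else None.

(* "Out of range" is [None]; it is designated, so that a rule whose
   conclusion instance leaves the fragment is trivially sound. *)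
Definition fragment_logic : fvlogic L :=
  @FVLogic L fragment_value
    (fun o => if o is Some G then `[< Thm C (val G) >] else true) fragment_op.

Implicit Type v : nat -> tv fragment_logic.

Definition subst_of v : subst_t L := fun x => form_of (v x).

Lemma subst_of_fragment v x : v x -> fragment (subst_of v x).
Proof. by rewrite /subst_of; case: (v x) => // G _; apply/fragment_formsP/valP. Qed.

Lemma subst_of_wf v : wf_subst (subst_of v).
Proof.
by move=> x; rewrite /subst_of; case: (v x) => // G; case/fragment_formsP: (valP G).
Qed.

Lemma eval_Some_defined v G y : wf G -> eval v G = Some y ->
  forall x, occurs x G -> v x.
Proof.
elim/form_In_ind: G y => [x|c args IH] y /=; first by move=> _ Hv _ ->; rewrite Hv.
move=> [Hsize /foldr_andP Hwf]; rewrite /fragment_op val_mktuple_nth ?size_map //.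
case: ifP => // /allP Hall _ x /foldr_orP [a Ha Hx].
have := Hall (eval v a) (map_f _ (introT (InP _ _) Ha)).
by case Hev: (eval v a) => [ya|] // _; exact: IH a Ha ya (Hwf a Ha) Hev x Hx.
Qed.

Lemma eval_defined v G : wf G -> (forall x, occurs x G -> v x) ->
  eval v G = insub (subst (subst_of v) G).
Proof.
elim/form_In_ind: G => [x|c args IH] /=.
  by move=> _ /(_ x erefl); rewrite /subst_of; case: (v x) => //= G _; rewrite valK.
move=> [Hsize /foldr_andP Hwf] Hdef.
rewrite /fragment_op val_mktuple_nth ?size_map //.
have -> : map (eval v) args = map (insub \o subst (subst_of v)) args.
  apply: eq_map_In => a Ha; apply: IH => // [|x Hx]; first exact: Hwf.
  by apply: Hdef; apply/foldr_orP; exists a.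
case: ifP => [/allP Hall | /negbT /allPn [_ /mapP [a Ha ->]] /= Hnone].
  congr (insub (App c _)); rewrite -map_comp; apply/eq_in_map => a Ha /=.
  by have := Hall _ (map_f _ Ha); rewrite /=; case: insubP.
symmetry; apply: insubF; apply/negP => /fragment_formsP HG.
have HGa : subst (subst_of v) a \in fragment_forms.
  apply/fragment_formsP; apply: fragment_arg HG _.
  by apply/(List.in_map_iff _ _ _); exists a; split => //; apply/InP.
by move: Hnone; case: insubP => //; rewrite HGa.
Qed.

Lemma satisfies_fragmentP v G : wf G -> (forall x, occurs x G -> v x) ->
  fragment (subst (subst_of v) G) ->
  satisfies v G <-> Thm C (subst (subst_of v) G).
Proof.
move=> HG Hdef /fragment_formsP HF.
rewrite /satisfies eval_defined //; case: insubP => [u _ <- | ]; last by rewrite HF.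
by split=> /asboolP.
Qed.

Lemma satisfies_of_Thm v G : wf G ->
  ((forall x, occurs x G -> v x) -> dp (subst (subst_of v) G) <= n ->
     Thm C (subst (subst_of v) G)) ->
  satisfies v G.
Proof.
move=> HG HThm; rewrite /satisfies; case Hev: (eval v G) => [y|] //=.
have Hdef := eval_Some_defined HG Hev; move: Hev; rewrite eval_defined //.
case: insubP => // u /fragment_formsP [_ _ Hdp] Hu [<-]; apply/asboolP.
by rewrite Hu; apply: HThm.
Qed.

Lemma fragment_logic_cover :
  calc_wf C -> strictly_analytic C -> Defs.cover fragment_logic C.
Proof.
move=> [Wax Wr] SA; split=> [A HA v | r Hr v Hprem].
  apply: satisfies_of_Thm (Wax A HA) _ => _ _.
  apply: (@Thm_justified _ _ [::]) => //.
  by left; exists A, (subst_of v); split=> //; split=> //; exact: subst_of_wf.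
have [Wp Wc] := Wr r Hr; apply: satisfies_of_Thm Wc _ => Hdef Hdp.
apply: (@Thm_justified _ _ (map (subst (subst_of v)) r.1)).
  move=> _ /mapP [A /InP HA ->]; have [Hocc HdpA] := SA r Hr A HA.
  have HdefA x : occurs x A -> v x by move/Hocc; exact: Hdef.
  have HfragA : fragment (subst (subst_of v) A).
    apply: fragment_subst (Wp A HA) _ _.
      by move=> x /HdefA; exact: subst_of_fragment.
    exact: leq_trans (HdpA _ (subst_of_wf v)) Hdp.
  exact: (satisfies_fragmentP (Wp A HA) HdefA HfragA).1 (Hprem A HA).
right; exists r, (subst_of v); split=> //; split; first exact: subst_of_wf.
by split=> // A HA; apply: map_f; apply/InP.
Qed.

End FragmentLogic.

Lemma Thm_of_fragment_tautology (L : lang) (C : calculus L) (F : form L) : wf F ->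
  tautology (fragment_logic C (vars F) (dp F)) F -> Thm C F.
Proof.
move=> HF Htaut.
have Hvar x : occurs x F -> Var L x \in fragment_forms L (vars F) (dp F).
  by move=> Hx; apply/fragment_formsP; split => // y ->; exact: occurs_vars.
pose v0 x : tv (fragment_logic C (vars F) (dp F)) := insub (Var L x).
have Hv0 x (Hx : occurs x F) : v0 x = Some (Sub (Var L x) (Hvar x Hx)).
  exact: insubT.
have HF0 : subst (subst_of v0) F = F.
  by apply: subst_fixed => x Hx; rewrite /subst_of Hv0.
rewrite -HF0; apply/(satisfies_fragmentP HF _ _).1 => //.
- by move=> x Hx; rewrite Hv0.
- by rewrite HF0; split => // x /occurs_vars.
Qed.

Theorem corollary4 (L : lang) (C : calculus L) :
  calc_wf C -> strictly_analytic C ->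
  forall F : form L, wf F -> (MC C F <-> Thm C F).
Proof.
move=> HC SA F HF; split=> [HMC | HThm M HM].
- by apply: Thm_of_fragment_tautology HF _; apply: HMC; exact: fragment_logic_cover.
- exact: Thm_tautology HC HM F HThm.
Qed.
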